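(* For all integers $n\ge0$ and $p\ge0$, $$\mathcal{B}_{n,p}=\sum_{k=0}^{n+p}\binom{n+p}{k}\binom{n+p}{p}^{-1}\phi_{n+p-k}\,B_k^{(p)}-\sum_{k=1}^{p}\binom{n+k}{k}^{-1}\binom{p}{k}B_{n+k}^{(k)}.$$
   Context: $\phi_m$ denotes the $m$-th Bell number. The generalized Bernoulli numbers $B_m^{(\alpha)}$ are defined by $\left(\frac{t}{e^t-1}\right)^\alpha=\sum_{m\ge0}B_m^{(\alpha)}\frac{t^m}{m!}$. For an integer $p\ge0$, the $p$-Bell numbers $\mathcal{B}_{n,p}$ are defined by $\sum_{n\ge0}\mathcal{B}_{n,p}\frac{z^n}{n!}=\sum_{n\ge0}\binom{n+p}{p}^{-1}\frac{(e^z-1)^n}{n!}$. *)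

From mathcomp Require Import all_boot all_order all_algebra.
Set Implicit Arguments. Unset Strict Implicit. Unset Printing Implicit Defensive.
Import Order.TTheory GRing.Theory Num.Theory.
Local Open Scope ring_scope.

Definition fps := nat -> rat.

Definition fone : fps := fun n => (n == 0%N)%:R.

Definition fmul (f g : fps) : fps :=
  fun n => \sum_(i < n.+1) f i * g (n - i)%N.

Definition fpow (f : fps) (k : nat) : fps := iter k (fmul f) fone.

Fixpoint finv_aux (f : fps) (n : nat) : seq rat :=
  match n with
  | 0 => [:: (f 0%N)^-1]
  | n'.+1 =>
      let s := finv_aux f n' in
      rcons s (- (f 0%N)^-1 * \sum_(1 <= i < n'.+2) f i * nth 0 s (n'.+1 - i)%N)
  end.

Definition finv (f : fps) : fps := fun n => nth 0 (finv_aux f n) n.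

Definition fexpm1 : fps := fun n => if n == 0%N then 0 else (n`!%:R)^-1.

Definition fexpm1_div_t : fps := fun n => ((n.+1)`!%:R)^-1.

Definition ftodd : fps := finv fexpm1_div_t.

Definition genBernoulli (alpha m : nat) : rat := m`!%:R * fpow ftodd alpha m.

(* Stirling numbers of the second kind and Bell numbers phi_m. *)
Fixpoint stirling2 (n k : nat) : nat :=
  match n, k with
  | 0, 0 => 1
  | 0, _.+1 => 0
  | _.+1, 0 => 0
  | n'.+1, k'.+1 => (k'.+1 * stirling2 n' k'.+1 + stirling2 n' k')%N
  end.

Definition bell (m : nat) : nat := \sum_(k < m.+1) stirling2 m k.

(* p-Bell numbers: sum_N B_{N,p} z^N/N! = sum_n C(n+p,p)^{-1} (e^z-1)^n/n!.
   Since (e^z-1)^n has order n, only n <= N contribute to the z^N coefficient. *)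
Definition pBell (N p : nat) : rat :=
  N`!%:R * \sum_(n < N.+1) ('C(n + p, p)%:R)^-1 * (n`!%:R)^-1 * fpow fexpm1 n N.

From Pilot Require Import Defs.
From mathcomp Require Import all_boot all_order all_algebra.
From mathcomp Require Import ring zify.
Set Implicit Arguments. Unset Strict Implicit. Unset Printing Implicit Defensive.
Import Order.TTheory GRing.Theory Num.Theory.
Local Open Scope ring_scope.

(* Write X = e^t - 1 and T = t/(e^t - 1), so that T X = t.  The exponential
   generating function of the p-Bell numbers is p! * sum_j X^j/(j+p)!, and
   X^p * sum_j X^j/(j+p)! = e^X - sum_(m<p) X^m/m!.  Multiplying by T^p turns
   X^p into t^p and X^m T^p into t^m T^(p-m), whose coefficients are the
   generalized Bernoulli numbers, while e^X = sum_i bell i t^i/i! by the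
   Stirling expansion of X^j/j!.  Comparing coefficients of t^(n+p) gives the
   formula.  All series are handled through their truncations to polynomials
   of degree n+p. *)

Section TruncatedEquality.
Variable R : nzSemiRingType.

Definition eq_upto (M : nat) (p q : {poly R}) := forall i, (i <= M)%N -> p`_i = q`_i.

Lemma eq_upto_trans M p q r : eq_upto M p q -> eq_upto M q r -> eq_upto M p r.
Proof. by move=> hpq hqr i hi; rewrite hpq // hqr. Qed.

Lemma eq_upto_mul M p q r s :
  eq_upto M p q -> eq_upto M r s -> eq_upto M (p * r) (q * s).
Proof.
move=> hpq hrs i hi; rewrite !coefM; apply: eq_bigr => j _.
have hj : (j <= M)%N by have := ltn_ord j; lia.
by rewrite hpq // hrs //; lia.
Qed.

Lemma eq_upto_mull M r p q : eq_upto M p q -> eq_upto M (r * p) (r * q).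
Proof. exact: eq_upto_mul. Qed.

Lemma eq_upto_mulr M r p q : eq_upto M p q -> eq_upto M (p * r) (q * r).
Proof. by move/eq_upto_mul; apply. Qed.

Lemma eq_upto_exp M p q k : eq_upto M p q -> eq_upto M (p ^+ k) (q ^+ k).
Proof.
move=> hpq; elim: k => [|k IH]; first by [].
by rewrite !exprS; apply: eq_upto_mul.
Qed.

End TruncatedEquality.

Definition fps_trunc (M : nat) (f : fps) : {poly rat} := \poly_(i < M.+1) f i.

Lemma coef_fps_trunc M f i : (i <= M)%N -> (fps_trunc M f)`_i = f i.
Proof. by move=> hi; rewrite coef_poly ltnS hi. Qed.

Lemma fpowE M f k m : (m <= M)%N -> fpow f k m = (fps_trunc M f ^+ k)`_m.
Proof.
elim: k m => [|k IH] m hm; first by rewrite expr0 coef1.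
rewrite /fpow iterS -/(fpow f k) exprS coefM; apply: eq_bigr => j _.
have hj : (j <= M)%N by have := ltn_ord j; lia.
by rewrite coef_fps_trunc // IH //; lia.
Qed.

Lemma size_finv_aux f m : size (finv_aux f m) = m.+1.
Proof. by elim: m => //= m IH; rewrite size_rcons IH. Qed.

Lemma nth_finv_aux f m i : (i <= m)%N -> nth 0 (finv_aux f m) i = Defs.finv f i.
Proof.
elim: m => [|m IH] hi; first by have -> : i = 0%N by lia.
rewrite /= nth_rcons size_finv_aux; case: ltnP => hmi; first by apply: IH; lia.
have -> : i = m.+1 by lia.
by rewrite eqxx /Defs.finv /= nth_rcons size_finv_aux ltnn eqxx.
Qed.

Lemma finvS f m : Defs.finv f m.+1 =
  - (f 0%N)^-1 * \sum_(1 <= i < m.+2) f i * Defs.finv f (m.+1 - i)%N.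
Proof.
rewrite {1}/Defs.finv /= nth_rcons size_finv_aux ltnn eqxx.
congr (_ * _); rewrite big_nat [RHS]big_nat; apply: eq_bigr => i /andP [hi1 hi2].
by rewrite nth_finv_aux //; lia.
Qed.

Lemma fmul_finv f m : f 0%N != 0 -> fmul f (Defs.finv f) m = fone m.
Proof.
move=> f0; rewrite /fmul /fone; case: m => [|m].
  by rewrite big_ord1 subnn /Defs.finv /= divff.
rewrite big_ord_recl /= subn0 finvS mulrA mulrN mulfV // mulN1r.
by rewrite big_add1 /= big_mkord addNr.
Qed.

Lemma fact_neq0 {R : numDomainType} k : (k`!%:R : R) != 0.
Proof. by rewrite pnatr_eq0 -lt0n fact_gt0. Qed.

Lemma natr_binE {R : numFieldType} m k : (k <= m)%N ->
  ('C(m, k)%:R : R) = m`!%:R / (k`!%:R * (m - k)`!%:R).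
Proof. by move=> hkm; rewrite -(bin_fact hkm) !natrM; field; rewrite !fact_neq0. Qed.

Lemma stirling2_eq0 m j : (m < j)%N -> stirling2 m j = 0%N.
Proof. by elim: m j => [|m IH] [|j] //= hmj; rewrite !IH //; lia. Qed.

Lemma deriv_expm1 M :
  eq_upto M (fps_trunc M.+1 fexpm1)^`() (1 + fps_trunc M.+1 fexpm1).
Proof.
move=> i hi; rewrite coef_deriv coefD coef1 !coef_fps_trunc //; last by lia.
rewrite /fexpm1 /=; case: i hi => [|i] hi /=; first by rewrite mulr1n.
rewrite add0r (factS i.+1) natrM -mulr_natr; field; rewrite fact_neq0 /=.
by rewrite -(natrD _ 2) pnatr_eq0.
Qed.

(* Differentiating X^(j+1) with X' = 1 + X yields the Stirling recurrence. *)
Lemma fpow_expm1S m j : (m.+1)%:R * fpow fexpm1 j.+1 m.+1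
  = (j.+1)%:R * (fpow fexpm1 j m + fpow fexpm1 j.+1 m).
Proof.
rewrite !(@fpowE m.+1) //; set X := fps_trunc m.+1 fexpm1.
have -> : (m.+1)%:R * (X ^+ j.+1)`_m.+1 = ((X ^+ j.+1)^`())`_m.
  by rewrite coef_deriv mulr_natl.
rewrite deriv_exp /= coefMn (eq_upto_mulr (X ^+ j) (@deriv_expm1 m) (leqnn m)).
by rewrite mulrDl mul1r coefD -exprS mulr_natl.
Qed.

Lemma fpow_expm1_stirling2 m j :
  m`!%:R * fpow fexpm1 j m = j`!%:R * (stirling2 m j)%:R :> rat.
Proof.
elim: m j => [|m IH] [|j].
- by rewrite /= /fone /= mulr1.
- by rewrite /= /fmul big_ord1 /fexpm1 /= !mul0r !mulr0.
- by rewrite /= /fone /= !mulr0.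
- rewrite factS natrM mulrAC fpow_expm1S -mulrA mulrDl ![_ * m`!%:R]mulrC !IH /=.
  by rewrite (factS j) !natrD !natrM; ring.
Qed.

Section Truncations.
Variable M : nat.
Let X := fps_trunc M fexpm1.
Let D := fps_trunc M fexpm1_div_t.
Let T := fps_trunc M ftodd.

Lemma expm1_mulX : eq_upto M X ('X * D).
Proof.
move=> i hi; rewrite coefXM /X coef_fps_trunc //; case: i hi => [|i] hi //=.
by rewrite /D coef_fps_trunc //; lia.
Qed.

Lemma todd_mul_expm1_div_t : eq_upto M (T * D) 1.
Proof.
move=> i hi; rewrite mulrC coefM coef1 -[RHS](@fmul_finv fexpm1_div_t) //.
apply: eq_bigr => j _.
have hj : (j <= M)%N by have := ltn_ord j; lia.
by rewrite /D /T !coef_fps_trunc //; lia.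
Qed.

Lemma todd_expm1_exp k : eq_upto M (T ^+ k * X ^+ k) ('X ^+ k).
Proof.
apply: eq_upto_trans (eq_upto_mull _ (eq_upto_exp k expm1_mulX)) _.
rewrite exprMn mulrCA -exprMn.
apply: eq_upto_trans (eq_upto_mull _ (eq_upto_exp k todd_mul_expm1_div_t)) _.
by rewrite expr1n mulr1.
Qed.

Lemma coef_todd_expm1 p m : (m <= p)%N -> (m <= M)%N ->
  (T ^+ p * X ^+ m)`_M = (T ^+ (p - m))`_(M - m).
Proof.
move=> hmp hmM; rewrite -(subnK hmp) exprD -mulrA addnK.
by rewrite (eq_upto_mull _ (todd_expm1_exp m) (leqnn M)) coefMXn ltnNge hmM.
Qed.

Definition exp_expm1 : {poly rat} := \sum_(m < M.+1) ((m`!%:R)^-1)%:P * X ^+ m.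

Lemma coef_exp_expm1 i : (i <= M)%N -> exp_expm1`_i = (i`!%:R)^-1 * (bell i)%:R.
Proof.
move=> hi; rewrite coef_sum.
transitivity (\sum_(m < M.+1) (i`!%:R)^-1 * (stirling2 i m)%:R : rat).
  apply: eq_bigr => m _; rewrite coefCM -fpowE //.
  apply: (mulfI (@fact_neq0 rat i)); rewrite mulrCA fpow_expm1_stirling2.
  by field; rewrite !fact_neq0.
rewrite -mulr_sumr /bell natr_sum; congr (_ * _).
rewrite [RHS](big_ord_widen M.+1 (fun m => (stirling2 i m)%:R : rat)); last by lia.
rewrite [RHS]big_mkcond /=; apply: eq_bigr => m _.
by case: ifP => // hmi; rewrite stirling2_eq0 //; lia.
Qed.

Lemma exp_expm1_split n p : M = (n + p)%N ->
  exp_expm1 = \sum_(m < p) ((m`!%:R)^-1)%:P * X ^+ m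
    + X ^+ p * \sum_(j < n.+1) (((j + p)`!%:R)^-1)%:P * X ^+ j.
Proof.
move=> hM; rewrite /exp_expm1 -(big_mkord xpredT (fun m => ((m`!%:R)^-1)%:P * X ^+ m)).
have hp : (p <= M.+1)%N by lia.
rewrite (big_cat_nat (leq0n p) hp) /= big_mkord; congr (_ + _).
rewrite -{1}(add0n p) big_addn hM (_ : (n + p).+1 - p = n.+1)%N; last by lia.
rewrite big_mkord mulr_sumr; apply: eq_bigr => j _.
by rewrite exprD mulrA mulrC.
Qed.

Lemma coef_pBell_series n p : M = (n + p)%N ->
  (\sum_(j < n.+1) (((j + p)`!%:R)^-1)%:P * X ^+ j)`_n =
  \sum_(k < M.+1) (T ^+ p)`_k * ((M - k)`!%:R)^-1 * (bell (M - k))%:R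
  - \sum_(m < p) (m`!%:R)^-1 * (T ^+ (p - m))`_(M - m).
Proof.
move=> hM; set S := \sum_(j < n.+1) _.
have coef_TpS : (T ^+ p * (X ^+ p * S))`_M = S`_n.
  rewrite mulrA (eq_upto_mulr S (todd_expm1_exp p) (leqnn M)) coefXnM.
  by rewrite hM ltnNge leq_addl addnK.
have coef_Tpexp : (T ^+ p * exp_expm1)`_M =
    \sum_(k < M.+1) (T ^+ p)`_k * ((M - k)`!%:R)^-1 * (bell (M - k))%:R.
  rewrite coefM; apply: eq_bigr => k _.
  by rewrite coef_exp_expm1 ?mulrA //; lia.
have coef_Tpsum : (T ^+ p * \sum_(m < p) ((m`!%:R)^-1)%:P * X ^+ m)`_M =
    \sum_(m < p) (m`!%:R)^-1 * (T ^+ (p - m))`_(M - m).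
  rewrite mulr_sumr coef_sum; apply: eq_bigr => m _.
  by rewrite mulrCA coefCM coef_todd_expm1 //; have := ltn_ord m; lia.
rewrite -coef_TpS -coef_Tpexp -coef_Tpsum (exp_expm1_split hM) mulrDr coefD.
by rewrite addrAC subrr add0r.
Qed.

End Truncations.

Lemma pBell_coef n p : pBell n p = n`!%:R * p`!%:R *
  (\sum_(j < n.+1) (((j + p)`!%:R)^-1)%:P * fps_trunc (n + p) fexpm1 ^+ j)`_n.
Proof.
rewrite /pBell coef_sum -[RHS]mulrA; congr (_ * _).
rewrite mulr_sumr; apply: eq_bigr => j _.
rewrite coefCM -fpowE; last by have := ltn_ord j; lia.
rewrite (natr_binE (leq_addl j p)) addnK.
by field; rewrite !fact_neq0.
Qed.

Theorem mainTheorem18 (n p : nat) :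
  pBell n p =
    \sum_(k < (n + p).+1)
       'C(n + p, k)%:R * ('C(n + p, p)%:R)^-1 * (bell (n + p - k))%:R
         * genBernoulli p k
    - \sum_(1 <= k < p.+1)
       ('C(n + k, k)%:R)^-1 * 'C(p, k)%:R * genBernoulli k (n + k).
Proof.
rewrite pBell_coef (coef_pBell_series (erefl (n + p)%N)) mulrBr; congr (_ - _).
- rewrite mulr_sumr; apply: eq_bigr => k _.
  have hk : (k <= n + p)%N by rewrite -ltnS.
  rewrite /genBernoulli (fpowE _ _ hk) (natr_binE hk) (natr_binE (leq_addl n p)) addnK.
  by field; rewrite !fact_neq0.
- rewrite big_add1 /= big_nat_rev /= big_mkord mulr_sumr; apply: eq_bigr => j _.
  have hjp := ltn_ord j.
  rewrite add0n (_ : (p - j.+1).+1 = p - j)%N; last by lia.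
  have hpj : (p - j <= p)%N by lia.
  rewrite /genBernoulli (@fpowE (n + p)); last by lia.
  rewrite (natr_binE (leq_addl n (p - j))) addnK (natr_binE hpj) (subKn (ltnW hjp)).
  rewrite (_ : n + (p - j) = n + p - j)%N; last by lia.
  by field; rewrite !fact_neq0.
Qed.
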